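(* Consider the $7$-dimensional nilpotent Lie algebras with basis $\{e_1,\dots,e_7\}$ and dual basis $\{e^i\}$ given by $(de^1,\dots,de^7)$: $\mathfrak g_1$: $(0,0,e^{12},e^{13},e^{23},e^{15}+e^{24},e^{16}+e^{34})$; $\mathfrak g_2$: $(0,0,0,-e^{12},e^{14}+e^{23},e^{15}+e^{34},e^{16}+e^{35})$; $\mathfrak g_3$: $(0,0,e^{12},e^{13},e^{14}+e^{23},e^{15}+e^{24},e^{25}-e^{34})$. Then the sets $\mathbf S$ of signatures of diagonal metrics satisfying $\operatorname{Ric}=-\frac12\mathrm{id}+\frac12N$ are: for $\mathfrak g_1$, $\{\emptyset,12457,1357,234,125,1345,237,47\}$; for $\mathfrak g_2$, $\{\emptyset,1257,146,24567,123467,135,237,3456\}$; for $\mathfrak g_3$, $\{\emptyset,1357\}$.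
   Context: $d$ is the Chevalley–Eilenberg differential and $e^{ij}=e^i\wedge e^j$; the basis $\{e_i\}$ is a nice basis. The root matrix $M_\Delta$ has one row for each triple $(\{i,j\},k)$ with $[e_i,e_j]$ a nonzero multiple of $e_k$, with $+1$ in position $k$, $-1$ in positions $i,j$, $0$ elsewhere. $N$ is the diagonal Nikolayevsky derivation: the diagonal matrix with diagonal $M_\Delta^Tb+[1]$, where $b$ solves $M_\Delta M_\Delta^Tb=[1]$, $[1]$ the all-ones vector. A diagonal metric is $\sum_ig_ie^i\otimes e^i$, $g_i\neq0$, with Ricci operator $\operatorname{Ric}$. A signature is recorded as the string of indices $i$ with $g_i<0$; $\emptyset$ denotes positive definite. *)

From HB Require Import structures.
From mathcomp Require Import all_boot all_order all_algebra.
From mathcomp Require Import reals.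
Set Implicit Arguments. Unset Strict Implicit. Unset Printing Implicit Defensive.
Import Order.TTheory GRing.Theory Num.Theory.
Local Open Scope ring_scope.

(* Lie algebras given by structure constants on a basis e_0..e_{n-1}:        *)
(*   [e_i, e_j] = \sum_k c i j k e_k.                                        *)

(* Differentials, given 1-based: D k is a list of (p, q, a) meaning that     *)
(* de^k contains the term a e^{pq} = a e^p /\ e^q.                           *)
Local Close Scope ring_scope.
Definition dform := nat -> seq (nat * nat * int).

(* de^k(e_i, e_j) (1-based indices), with e^{pq}(e_p,e_q) = 1.               *)
Definition dcoef (D : dform) (k i j : nat) : int :=
  \sum_(t <- D k)
     (if (t.1.1 == i) && (t.1.2 == j) then t.2
      else if (t.1.1 == j) && (t.1.2 == i) then - t.2 else 0).

Local Open Scope ring_scope.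
(* Chevalley--Eilenberg convention de^k(X,Y) = - e^k([X,Y]), hence the       *)
(* structure constants (0-based indices in 'I_n).                            *)
Definition sc_of (R : nzRingType) (n : nat) (D : dform) (i j k : 'I_n) : R :=
  (- dcoef D k.+1 i.+1 j.+1)%:~R.

(* Left-invariant diagonal metric  g = \sum_i g_i e^i (x) e^i  (g_i <> 0).   *)

(* Levi-Civita connection via the Koszul formula:                           *)
(*  2 g(nabla_X Y, Z) = g([X,Y],Z) - g([Y,Z],X) + g([Z,X],Y);                *)
(*  LC c g i j k = coefficient of e_k in nabla_{e_i} e_j.                    *)
Definition LC (R : fieldType) n (c : 'I_n -> 'I_n -> 'I_n -> R) (g : 'I_n -> R)
  (i j k : 'I_n) : R :=
  (c i j k * g k - c j k i * g i + c k i j * g j) / (2 * g k).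

(* Curvature R(X,Y) = [nabla_X, nabla_Y] - nabla_[X,Y];                      *)
(* curv a b c d = coefficient of e_d in R(e_a,e_b) e_c.                      *)
Definition curv (R : fieldType) n (c : 'I_n -> 'I_n -> 'I_n -> R) (g : 'I_n -> R)
  (a b k d : 'I_n) : R :=
  \sum_(m < n) LC c g b k m * LC c g a m d
  - \sum_(m < n) LC c g a k m * LC c g b m d
  - \sum_(m < n) c a b m * LC c g m k d.

(* Ricci tensor ric(Y,Z) = tr (X |-> R(X,Y) Z).                              *)
Definition ric (R : fieldType) n (c : 'I_n -> 'I_n -> 'I_n -> R) (g : 'I_n -> R)
  (b k : 'I_n) : R :=
  \sum_(a < n) curv c g a b k a.

(* Ricci operator: g(Ric X, Y) = ric(X,Y);                                   *)
(* Ric_op c g b d = coefficient of e_d in Ric(e_b).                          *)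
Definition Ric_op (R : fieldType) n (c : 'I_n -> 'I_n -> 'I_n -> R) (g : 'I_n -> R)
  (b d : 'I_n) : R :=
  ric c g b d / g d.

Definition Delta (R : nzRingType) n (c : 'I_n -> 'I_n -> 'I_n -> R)
  : {set 'I_n * 'I_n * 'I_n} :=
  [set t : 'I_n * 'I_n * 'I_n | (t.1.1 < t.1.2)%N && (c t.1.1 t.1.2 t.2 != 0)
           && [forall l, (l != t.2) ==> (c t.1.1 t.1.2 l == 0)]].

(* Row of the root matrix M_Delta indexed by the triple t = ((i,j),k):       *)
Definition rootrow (R : nzRingType) n (t : 'I_n * 'I_n * 'I_n) (l : 'I_n) : R :=
  (l == t.2)%:R - (l == t.1.1)%:R - (l == t.1.2)%:R.

(* v is the diagonal of N = diag(M^T b + [1]) where M M^T b = [1].           *)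
(* (M^T b is uniquely determined by M M^T b = [1], so N is well defined.)    *)
Definition nik_diag (R : nzRingType) n (c : 'I_n -> 'I_n -> 'I_n -> R)
  (v : 'I_n -> R) : Prop :=
  exists b : 'I_n * 'I_n * 'I_n -> R,
    (forall t, t \in Delta c ->
       \sum_(s in Delta c) (\sum_(l < n) rootrow R t l * rootrow R s l) * b s = 1)
    /\ (forall l, v l = \sum_(t in Delta c) rootrow R t l * b t + 1).

Definition ric_nik (R : fieldType) n (c : 'I_n -> 'I_n -> 'I_n -> R)
  (g : 'I_n -> R) : Prop :=
  exists v, nik_diag c v /\
    forall b d : 'I_n,
      Ric_op c g b d = (if b == d then - 2^-1 + 2^-1 * v b else 0).

Definition signature (R : realDomainType) n (g : 'I_n -> R) : {set 'I_n} :=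
  [set i | g i < 0].

Definition is_sig (R : realFieldType) n (c : 'I_n -> 'I_n -> 'I_n -> R)
  (S : {set 'I_n}) : Prop :=
  exists g : 'I_n -> R, (forall i, g i != 0) /\ signature g = S /\ ric_nik c g.

(* A signature written as a string of 1-based indices, e.g. [:: 1;3;5;7].   *)
Definition sig_of n (s : seq nat) : {set 'I_n} := [set i : 'I_n | i.+1 \in s].

Local Close Scope ring_scope.
Definition D1 : dform := fun k =>
  match k with
  | 3 => [:: (1, 2, Posz 1)]
  | 4 => [:: (1, 3, Posz 1)]
  | 5 => [:: (2, 3, Posz 1)]
  | 6 => [:: (1, 5, Posz 1); (2, 4, Posz 1)]
  | 7 => [:: (1, 6, Posz 1); (3, 4, Posz 1)]
  | _ => [::]
  end.

Definition D2 : dform := fun k =>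
  match k with
  | 4 => [:: (1, 2, Negz 0) (* = -1 *)]
  | 5 => [:: (1, 4, Posz 1); (2, 3, Posz 1)]
  | 6 => [:: (1, 5, Posz 1); (3, 4, Posz 1)]
  | 7 => [:: (1, 6, Posz 1); (3, 5, Posz 1)]
  | _ => [::]
  end.

Definition D3 : dform := fun k =>
  match k with
  | 3 => [:: (1, 2, Posz 1)]
  | 4 => [:: (1, 3, Posz 1)]
  | 5 => [:: (1, 4, Posz 1); (2, 3, Posz 1)]
  | 6 => [:: (1, 5, Posz 1); (2, 4, Posz 1)]
  | 7 => [:: (2, 5, Posz 1); (3, 4, Negz 0) (* = -1 *)]
  | _ => [::]
  end.

(* In the nice basis a diagonal metric g has diagonal Ricci operator,
   Ric e_l = 1/2 (M_Delta^T X)_l e_l, where X_t = g_k / (g_i g_j) for the root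
   t = ((i,j),k).  Since N - id = M_Delta^T b with M_Delta M_Delta^T b = [1], the
   equation Ric = -1/2 id + 1/2 N is equivalent to the Gram system
   M_Delta M_Delta^T X = [1].  The solutions X of this linear system that also
   satisfy the multiplicative relations among the X_t are finitely many: two for
   g1 and g2, one for g3.  As sign g_k = sign g_i * sign g_j * sign X_t, a signature
   occurs if and only if it is consistent with the signs of one of these solutions;
   conversely, changing the signs of a metric realising a solution realises every
   consistent signature.  The Ricci formula is checked by normalising Laurent
   polynomials in the g_i, and the consistent signatures are enumerated by
   computation. *)

From HB Require Import structures.
From mathcomp Require Import all_boot all_order all_algebra.
From mathcomp Require Import reals.
From mathcomp Require Import ring lra.
Set Implicit Arguments. Unset Strict Implicit. Unset Printing Implicit Defensive.
Import Order.TTheory GRing.Theory Num.Theory.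
Local Open Scope ring_scope.

(** * Laurent polynomials *)

Definition expv := seq int.

Fixpoint expv_add (e f : expv) : expv :=
  match e, f with
  | a :: e', b :: f' => (a + b) :: expv_add e' f'
  | [::], _ => f
  | _, [::] => e
  end.

Definition expv_opp (e : expv) : expv := map -%R e.

Definition expv_unit (n i : nat) : expv := ncons i 0 (1 :: nseq (n - i.+1) 0).

(* A Laurent polynomial with integer coefficients in variables x_0, x_1, ...
   is a list of (coefficient, exponent list) pairs. *)
Definition lpoly := seq (int * expv).

Definition lpoly_trim (P : lpoly) : lpoly := filter (fun t => t.1 != 0) P.

Definition lpoly_scale (z : int) (P : lpoly) : lpoly := map (fun t => (z * t.1, t.2)) P.

Definition lpoly_mul (P Q : lpoly) : lpoly :=
  flatten (map (fun a => map (fun b => (a.1 * b.1, expv_add a.2 b.2)) Q) P).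

Definition lpoly_sum (n : nat) (F : nat -> lpoly) : lpoly := flatten (map F (iota 0 n)).

Fixpoint lpoly_add_term (t : int * expv) (P : lpoly) : lpoly :=
  match P with
  | [::] => [:: t]
  | u :: P' => if u.2 == t.2 then (u.1 + t.1, u.2) :: P' else u :: lpoly_add_term t P'
  end.

(* Sound but incomplete: monomials are merged only when their exponent lists
   are syntactically equal. *)
Definition lpoly_eq0 (P : lpoly) : bool :=
  all (fun t => t.1 == 0) (foldr lpoly_add_term [::] P).

Section LaurentEvaluation.
Variables (R : fieldType) (x : nat -> R).
Hypothesis x_neq0 : forall k, x k != 0.

Fixpoint monx_from (k : nat) (e : expv) : R :=
  if e is a :: e' then x k ^ a * monx_from k.+1 e' else 1.

Definition lpoly_eval (P : lpoly) : R := \sum_(t <- P) t.1%:~R * monx_from 0 t.2.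

Lemma monx_from_add k e f : monx_from k (expv_add e f) = monx_from k e * monx_from k f.
Proof.
elim: e f k => [|a e IH] [|b f] k /=; rewrite ?mul1r ?mulr1 //.
by rewrite IH expfzDr // mulrACA.
Qed.

Lemma monx_from_opp k e : monx_from k (expv_opp e) = (monx_from k e)^-1.
Proof. by elim: e k => [|a e IH] k /=; rewrite ?invr1 // IH invfM invr_expz. Qed.

Lemma monx_unit n i : monx_from 0 (expv_unit n i) = x i.
Proof.
have zeros k m : monx_from k (nseq m 0) = 1.
  by elim: m k => //= m IH k; rewrite IH expr0z mulr1.
have shift k e : monx_from k (ncons i 0 e) = monx_from (k + i) e.
  by elim: i k => [|i IH] k /=; rewrite ?addn0 // expr0z mul1r IH addSnnS.
by rewrite /expv_unit shift /= zeros expr1z mulr1.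
Qed.

Lemma lpoly_eval_cat P Q : lpoly_eval (P ++ Q) = lpoly_eval P + lpoly_eval Q.
Proof. exact: big_cat. Qed.

Lemma lpoly_eval_scale z P : lpoly_eval (lpoly_scale z P) = z%:~R * lpoly_eval P.
Proof.
rewrite /lpoly_eval big_map mulr_sumr; apply: eq_bigr => t _.
by rewrite intrM mulrA.
Qed.

Lemma lpoly_eval_trim P : lpoly_eval (lpoly_trim P) = lpoly_eval P.
Proof.
rewrite /lpoly_eval big_filter [RHS](bigID (fun t => t.1 != 0)) /=.
by rewrite [X in _ + X]big1 ?addr0 // => t /negPn /eqP ->; rewrite mul0r.
Qed.

Lemma lpoly_eval_mul P Q : lpoly_eval (lpoly_mul P Q) = lpoly_eval P * lpoly_eval Q.
Proof.
rewrite /lpoly_eval big_flatten big_map mulr_suml; apply: eq_bigr => a _.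
rewrite big_map mulr_sumr; apply: eq_bigr => b _.
by rewrite monx_from_add intrM mulrACA.
Qed.

Lemma lpoly_eval_sum n F : lpoly_eval (lpoly_sum n F) = \sum_(m < n) lpoly_eval (F m).
Proof.
rewrite /lpoly_eval big_flatten big_map.
by rewrite -(big_mkord xpredT (fun m => lpoly_eval (F m))) /index_iota subn0.
Qed.

Lemma lpoly_eval_add_term t P : lpoly_eval (lpoly_add_term t P) = lpoly_eval (t :: P).
Proof.
rewrite /lpoly_eval; elim: P => [|u P IH] //=.
case: eqP => [e|_]; rewrite !big_cons /=; last by rewrite IH big_cons; ring.
by rewrite intrD e; ring.
Qed.

Lemma lpoly_eq0_eval P : lpoly_eq0 P -> lpoly_eval P = 0.
Proof.
have -> : lpoly_eval P = lpoly_eval (foldr lpoly_add_term [::] P).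
  elim: P => [|t P IH] //=.
  by rewrite lpoly_eval_add_term /lpoly_eval !big_cons; congr (_ + _).
rewrite /lpoly_eq0 /lpoly_eval; elim: (foldr _ _ _) => [|t Q IH]; first by rewrite big_nil.
by rewrite big_cons /= => /andP[/eqP -> /IH ->]; rewrite mul0r addr0.
Qed.

End LaurentEvaluation.

(** * The Ricci operator of a diagonal metric *)

(* [dcoef] without the locked big operator, so that it computes. *)
Definition dcoef_rec (D : dform) (k i j : nat) : int :=
  foldr (fun t acc => (if (t.1.1 == i) && (t.1.2 == j) then t.2
     else if (t.1.1 == j) && (t.1.2 == i) then - t.2 else 0) + acc) 0 (D k).

Lemma dcoef_recE D k i j : dcoef_rec D k i j = dcoef D k i j.
Proof. by rewrite /dcoef unlock. Qed.

Definition sc_int (D : dform) (i j k : nat) : int := - dcoef_rec D k.+1 i.+1 j.+1.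

Lemma sc_ofE (R : nzRingType) n D (i j k : 'I_n) : @sc_of R n D i j k = (sc_int D i j k)%:~R.
Proof. by rewrite /sc_of /sc_int dcoef_recE. Qed.

Definition untri {n : nat} (t : 'I_n * 'I_n * 'I_n) : nat * nat * nat :=
  (val t.1.1, val t.1.2, val t.2).

Lemma untri_inj n : injective (@untri n).
Proof. by move=> [[? ?] ?] [[? ?] ?] [/val_inj -> /val_inj -> /val_inj ->]. Qed.

Definition rootrow_int (t : nat * nat * nat) (l : nat) : int :=
  (l == t.2)%:R - (l == t.1.1)%:R - (l == t.1.2)%:R.

Lemma rootrowE (R : nzRingType) n (t : 'I_n * 'I_n * 'I_n) l :
  rootrow R t l = (rootrow_int (untri t) l)%:~R.
Proof. by rewrite /rootrow /rootrow_int !intrB !mulrz_nat. Qed.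

Definition root_weight {R : fieldType} {n : nat} (g : 'I_n -> R) (t : 'I_n * 'I_n * 'I_n) : R :=
  g t.2 / (g t.1.1 * g t.1.2).

Lemma forall_ord_iota n (P : pred nat) : [forall l : 'I_n, P l] = all P (iota 0 n).
Proof.
apply/forallP/allP => [P_ord l|P_iota l]; last by apply: P_iota; rewrite mem_iota add0n ltn_ord.
by rewrite mem_iota add0n => lt_ln; exact: (P_ord (Ordinal lt_ln)).
Qed.

Lemma all_iota_ord {n : nat} {P : pred nat} (i : 'I_n) : all P (iota 0 n) -> P i.
Proof. by move/allP; apply; rewrite mem_iota add0n ltn_ord. Qed.

Section RicciCheck.
Variables (n : nat) (D : dform).

(* [LC_lpoly i j k] represents [2 * LC c g i j k], hence [curv_lpoly] and
   [Ric_lpoly] represent [4 * curv c g] and [4 * Ric_op c g]. *)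
Definition LC_lpoly (i j k : nat) : lpoly :=
  lpoly_trim [:: (sc_int D i j k, [::]);
                 (- sc_int D j k i, expv_add (expv_unit n i) (expv_opp (expv_unit n k)));
                 (sc_int D k i j, expv_add (expv_unit n j) (expv_opp (expv_unit n k)))].

Definition curv_lpoly (a b k d : nat) : lpoly :=
  lpoly_sum n (fun m => lpoly_mul (LC_lpoly b k m) (LC_lpoly a m d)) ++
  lpoly_scale (-1) (lpoly_sum n (fun m => lpoly_mul (LC_lpoly a k m) (LC_lpoly b m d))) ++
  lpoly_scale (-2) (lpoly_sum n (fun m => lpoly_scale (sc_int D a b m) (LC_lpoly m k d))).

Definition Ric_lpoly (b d : nat) : lpoly :=
  lpoly_mul (lpoly_sum n (fun a => curv_lpoly a b d a)) [:: (1, expv_opp (expv_unit n d))].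

Definition rootv (t : nat * nat * nat) : expv :=
  expv_add (expv_unit n t.2) (expv_opp (expv_add (expv_unit n t.1.1) (expv_unit n t.1.2))).

Definition diag_lpoly (T : seq (nat * nat * nat)) (b d : nat) : lpoly :=
  if b == d then lpoly_scale 2 [seq (rootrow_int t b, rootv t) | t <- T] else [::].

Definition ricci_check (T : seq (nat * nat * nat)) : bool :=
  all (fun b => all (fun d =>
    lpoly_eq0 (Ric_lpoly b d ++ lpoly_scale (-1) (diag_lpoly T b d))) (iota 0 n)) (iota 0 n).

Definition delta_check (T : seq (nat * nat * nat)) : bool :=
  all (fun i => all (fun j => all (fun k =>
    [&& (i < j)%N, sc_int D i j k != 0
      & all (fun l => (l != k) ==> (sc_int D i j l == 0)) (iota 0 n)]
    == ((i, j, k) \in T)) (iota 0 n)) (iota 0 n)) (iota 0 n).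

Lemma Delta_sc_of (R : numDomainType) T :
  delta_check (map (@untri n) T) -> Delta (@sc_of R n D) = [set t in T].
Proof.
move=> chk; apply/setP => -[[i j] k]; rewrite !inE /= !sc_ofE intr_eq0.
rewrite -(mem_map (@untri_inj n)).
move: chk => /(all_iota_ord i) /(all_iota_ord j) /(all_iota_ord k) /eqP <-.
rewrite -forall_ord_iota -andbA; congr [&& _, _ & _]; apply: eq_forallb => l.
by rewrite sc_ofE intr_eq0.
Qed.

Section Evaluation.
Variables (R : numFieldType) (g : 'I_n -> R).
Hypothesis g_neq0 : forall i, g i != 0.
Let c := @sc_of R n D.
Let x (k : nat) : R := oapp g 1 (insub k).

Let x_neq0 k : x k != 0.
Proof. by rewrite /x; case: insub => [i|] /=; [exact: g_neq0 | exact: oner_neq0]. Qed.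

Let x_val (i : 'I_n) : x i = g i.
Proof. by rewrite /x valK. Qed.

Let monx_unit_g (i : 'I_n) : monx_from x 0 (expv_unit n i) = g i.
Proof. by rewrite monx_unit x_val. Qed.

Lemma lpoly_eval_LC (i j k : 'I_n) : lpoly_eval x (LC_lpoly i j k) = 2 * LC c g i j k.
Proof.
rewrite lpoly_eval_trim /lpoly_eval !big_cons big_nil /=.
rewrite !monx_from_add // !monx_from_opp !monx_unit_g /LC /c !sc_ofE.
by field; rewrite g_neq0.
Qed.

Lemma lpoly_eval_curv (a b k d : 'I_n) :
  lpoly_eval x (curv_lpoly a b k d) = 4 * curv c g a b k d.
Proof.
rewrite /curv_lpoly !lpoly_eval_cat !lpoly_eval_scale !lpoly_eval_sum /curv.
have LC_LC (u v w z : 'I_n) :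
    \sum_(m < n) lpoly_eval x (lpoly_mul (LC_lpoly u v m) (LC_lpoly w m z))
  = 4 * \sum_(m < n) LC c g u v m * LC c g w m z.
  rewrite mulr_sumr; apply: eq_bigr => m _.
  by rewrite lpoly_eval_mul // !lpoly_eval_LC; ring.
have c_LC : \sum_(m < n) lpoly_eval x (lpoly_scale (sc_int D a b m) (LC_lpoly m k d))
          = 2 * \sum_(m < n) c a b m * LC c g m k d.
  rewrite mulr_sumr; apply: eq_bigr => m _.
  by rewrite lpoly_eval_scale lpoly_eval_LC /c sc_ofE; ring.
rewrite !LC_LC c_LC; ring.
Qed.

Lemma lpoly_eval_Ric (b d : 'I_n) : lpoly_eval x (Ric_lpoly b d) = 4 * Ric_op c g b d.
Proof.
rewrite /Ric_lpoly lpoly_eval_mul // lpoly_eval_sum.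
have -> : lpoly_eval x [:: (1, expv_opp (expv_unit n d))] = (g d)^-1.
  by rewrite /lpoly_eval big_cons big_nil /= monx_from_opp // monx_unit_g mul1r addr0.
under eq_bigr => a _ do rewrite lpoly_eval_curv.
by rewrite -mulr_sumr /Ric_op /ric; field.
Qed.

Lemma Ric_op_diag T : ricci_check (map (@untri n) T) -> forall b d : 'I_n,
  Ric_op c g b d = if b == d then 2^-1 * \sum_(t <- T) rootrow R t b * root_weight g t else 0.
Proof.
move=> chk b d.
have := @lpoly_eq0_eval R x _ (all_iota_ord d (all_iota_ord b chk)).
rewrite lpoly_eval_cat lpoly_eval_scale lpoly_eval_Ric => /eqP.
rewrite mulN1r subr_eq0 => /eqP Ric4.
apply: (@mulfI _ 4); first by rewrite pnatr_eq0.
rewrite Ric4 /diag_lpoly val_eqE; case: eqP => [->|_]; last by rewrite /lpoly_eval big_nil mulr0.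
rewrite lpoly_eval_scale mulrA (_ : 4 * 2^-1 = 2%:~R); last by field.
congr (_ * _); rewrite /lpoly_eval !big_map; apply: eq_bigr => t _ /=.
by rewrite -rootrowE /rootv !monx_from_add // !monx_from_opp monx_from_add // !monx_unit_g.
Qed.

End Evaluation.
End RicciCheck.

(** * The Gram system *)

Definition gram_system {R : numFieldType} {n : nat} (c : 'I_n -> 'I_n -> 'I_n -> R)
    (x : 'I_n * 'I_n * 'I_n -> R) : Prop :=
  forall s, s \in Delta c ->
    \sum_(t in Delta c) (\sum_(l < n) rootrow R s l * rootrow R t l) * x t = 1.

Section GramSystem.
Variables (R : numFieldType) (n : nat) (c : 'I_n -> 'I_n -> 'I_n -> R).

Lemma gram_sumE (x : 'I_n * 'I_n * 'I_n -> R) s :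
    \sum_(t in Delta c) (\sum_(l < n) rootrow R s l * rootrow R t l) * x t
  = \sum_(l < n) rootrow R s l * \sum_(t in Delta c) rootrow R t l * x t.
Proof.
under eq_bigr do rewrite mulr_suml.
rewrite exchange_big; apply: eq_bigr => l _; rewrite mulr_sumr.
by apply: eq_bigr => t _; rewrite mulrA.
Qed.

Lemma gram_system_eq_in (x y : 'I_n * 'I_n * 'I_n -> R) :
  {in Delta c, x =1 y} -> gram_system c x -> gram_system c y.
Proof.
move=> xy gram_x s s_in; rewrite -(gram_x s s_in).
by apply: eq_bigr => t t_in; rewrite xy.
Qed.

Variable g : 'I_n -> R.
Hypothesis Ric_opE : forall b d : 'I_n,
  Ric_op c g b d = if b == d then 2^-1 * \sum_(t in Delta c) rootrow R t b * root_weight g t else 0.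

(* The Ricci equation says M^T X = N - id = M^T b; multiplying by M gives the
   Gram system, and conversely b := X is a valid choice. *)
Lemma ric_nikP : ric_nik c g <-> gram_system c (root_weight g).
Proof.
split=> [[v [[b [Mb1 vE]] Ric_v]] s s_in | gram].
  have MX_Mb l : \sum_(t in Delta c) rootrow R t l * root_weight g t
               = \sum_(t in Delta c) rootrow R t l * b t.
    have half_neq0 : (2^-1 : R) != 0 by rewrite invr_eq0 pnatr_eq0.
    apply: (mulfI half_neq0); move: (Ric_v l l); rewrite Ric_opE eqxx vE => ->; ring.
  rewrite -(Mb1 s s_in) !gram_sumE; apply: eq_bigr => l _.
  by rewrite MX_Mb.
exists (fun l => \sum_(t in Delta c) rootrow R t l * root_weight g t + 1); split.
  by exists (root_weight g).
by move=> b d; rewrite Ric_opE; case: eqP => // ->; ring.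
Qed.

End GramSystem.

Definition sol_of {R : numFieldType} {n : nat} (T : seq ('I_n * 'I_n * 'I_n))
    (xs : seq rat) (t : 'I_n * 'I_n * 'I_n) : R :=
  ratr (nth 0 xs (index t T)).

Definition rootdot (R : nzRingType) {n} (s t : 'I_n * 'I_n * 'I_n) : R :=
  (s.2 == t.2)%:R - (s.2 == t.1.1)%:R - (s.2 == t.1.2)%:R
  - (s.1.1 == t.2)%:R + (s.1.1 == t.1.1)%:R + (s.1.1 == t.1.2)%:R
  - (s.1.2 == t.2)%:R + (s.1.2 == t.1.1)%:R + (s.1.2 == t.1.2)%:R.

Lemma sum_rootrow_mul (R : comNzRingType) n (s t : 'I_n * 'I_n * 'I_n) :
  \sum_(l < n) rootrow R s l * rootrow R t l = rootdot R s t.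
Proof.
have delta (a b : 'I_n) : \sum_(l < n) (l == a)%:R * (l == b)%:R = (a == b)%:R :> R.
  rewrite (bigD1 a) //= eqxx mul1r big1 ?addr0 // => l /negbTE ->.
  by rewrite mul0r.
rewrite /rootrow; under eq_bigr do rewrite !(mulrBl, mulrBr).
by rewrite !sumrB !delta /rootdot; ring.
Qed.

Lemma big_Delta (R : nzRingType) n (c : 'I_n -> 'I_n -> 'I_n -> R) T (F : _ -> R) :
  Delta c = [set t in T] -> uniq T -> \sum_(t in Delta c) F t = \sum_(t <- T) F t.
Proof. by move=> -> T_uniq; rewrite big_uniq //; apply: eq_bigl => t; rewrite inE. Qed.

Lemma foldr_andP (T : eqType) (P : T -> Prop) (s : seq T) :
  foldr (fun x Q => P x /\ Q) True s <-> {in s, forall x, P x}.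
Proof.
elim: s => [|x s IH] /=; first by split.
split=> [[Px /IH Ps] y | Ps]; first by rewrite inE => /predU1P[-> //|]; exact: Ps.
split; first by apply: Ps; rewrite inE eqxx.
by apply/IH => y y_in; apply: Ps; rewrite inE y_in orbT.
Qed.

Section GramSystemSeq.
Variables (R : numFieldType) (n : nat) (c : 'I_n -> 'I_n -> 'I_n -> R).
Variable T : seq ('I_n * 'I_n * 'I_n).
Hypotheses (Delta_T : Delta c = [set t in T]) (T_uniq : uniq T).

Lemma gram_system_seqP x : gram_system c x <->
  foldr (fun s P => \sum_(t <- T) rootdot R s t * x t = 1 /\ P) True T.
Proof.
rewrite foldr_andP /gram_system Delta_T.
split=> gram s; rewrite ?inE => s_in; rewrite -(gram s) ?inE //.
all: rewrite -Delta_T (big_Delta _ Delta_T T_uniq); apply: eq_bigr => t _.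
all: by rewrite sum_rootrow_mul.
Qed.

Definition rat_gram_check (xs : seq rat) : bool :=
  all (fun s => foldr (fun t acc => rootdot rat s t * nth 0 xs (index t T) + acc) 0 T == 1) T.

Lemma rat_gram_checkP xs : rat_gram_check xs -> gram_system c (sol_of T xs).
Proof.
move=> /allP chk; apply/gram_system_seqP/foldr_andP => s s_in.
move: (chk s s_in); rewrite -foldr_map foldrE big_map => /eqP/(congr1 (@ratr R)).
rewrite rmorph1 => <-; rewrite rmorph_sum; apply: eq_bigr => t _.
by rewrite rmorphM /rootdot !(rmorphB, rmorphD, rmorph_nat).
Qed.

End GramSystemSeq.

(** * Signatures and their classification *)

Definition sign_consistent {n : nat} (T : seq ('I_n * 'I_n * 'I_n)) (xs : seq rat)
    (s : 'I_n -> bool) : bool :=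
  all (fun t => s t.2 == s t.1.1 (+) s t.1.2 (+) (nth 0 xs (index t T) < 0)) T.

Section Signatures.
Variables (R : realFieldType) (n : nat).
Implicit Types (g : 'I_n -> R) (T : seq ('I_n * 'I_n * 'I_n)) (xs : seq rat).

Lemma root_weight_lt0 g t : (forall i, g i != 0) ->
  (g t.2 < 0) = (g t.1.1 < 0) (+) (g t.1.2 < 0) (+) (root_weight g t < 0).
Proof.
move=> g_neq0; have gij_neq0 : g t.1.1 * g t.1.2 != 0 by rewrite mulf_neq0.
have gk : g t.2 = root_weight g t * (g t.1.1 * g t.1.2) by rewrite /root_weight divfK.
have X_neq0 : root_weight g t != 0 by rewrite mulf_neq0 ?invr_eq0.
move: (root_weight g t) gk X_neq0 => X -> X_neq0.
by rewrite mulr_lt0 X_neq0 gij_neq0 mulr_lt0 !g_neq0 /= addbC.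
Qed.

Lemma signature_consistent g T xs : (forall i, g i != 0) ->
  {in T, root_weight g =1 sol_of T xs} -> sign_consistent T xs (fun i => i \in signature g).
Proof.
move=> g_neq0 gX; apply/allP => t t_in; rewrite !inE.
by rewrite root_weight_lt0 // gX // /sol_of ltrq0.
Qed.

Lemma root_weight_sign_flip g T xs (S : {set 'I_n}) :
  (forall i, g i != 0) -> {in T, root_weight g =1 sol_of T xs} ->
  sign_consistent T xs (fun i => i \in S) ->
  let h i := (-1) ^+ (i \in S) * `|g i| in
  [/\ forall i, h i != 0, signature h = S & {in T, root_weight h =1 sol_of T xs}].
Proof.
move=> g_neq0 gX /allP consistent h.
have h_neq0 i : h i != 0 by rewrite mulf_neq0 ?signr_eq0 ?normr_eq0.
split=> //.
  by apply/setP => i; rewrite !inE pmulr_llt0 ?normr_gt0 // signr_lt0.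
move=> t t_in; rewrite /root_weight /h invfM !invr_signM -!normfV -(gX t t_in).
rewrite [LHS](_ : _ = (-1) ^+ ((t.2 \in S) (+) (t.1.1 \in S) (+) (t.1.2 \in S))
                        * `|g t.2 * ((g t.1.1)^-1 * (g t.1.2)^-1)|).
  rewrite (eqP (consistent t t_in)) (_ : forall a b x : bool, a (+) b (+) x (+) a (+) b = x);
    last by do 3 case.
  by rewrite -(ltrq0 R) -/(sol_of T xs t) -gX // /root_weight invfM mulr_sign_norm.
by rewrite !signr_addb !normrM; ring.
Qed.

End Signatures.

Section Classification.
Variables (R : realFieldType) (n : nat) (c : 'I_n -> 'I_n -> 'I_n -> R).
Variables (T : seq ('I_n * 'I_n * 'I_n)) (sols : seq (seq rat)).
Hypothesis Delta_T : Delta c = [set t in T].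
Hypothesis Ric_opE : forall g : 'I_n -> R, (forall i, g i != 0) -> forall b d : 'I_n,
  Ric_op c g b d = if b == d then 2^-1 * \sum_(t in Delta c) rootrow R t b * root_weight g t else 0.
Hypothesis sols_gram : forall xs, xs \in sols -> gram_system c (sol_of T xs).
Hypothesis sols_realized : forall xs, xs \in sols ->
  exists2 g : 'I_n -> R, (forall i, g i != 0) & {in T, root_weight g =1 sol_of T xs}.
Hypothesis sols_complete : forall g : 'I_n -> R, (forall i, g i != 0) ->
  gram_system c (root_weight g) ->
  exists2 xs, xs \in sols & {in T, root_weight g =1 sol_of T xs}.

Lemma is_sig_consistent S :
  is_sig c S <-> has (fun xs => sign_consistent T xs (fun i => i \in S)) sols.
Proof.
split=> [[g [g_neq0 [<- ric]]] | /hasP[xs xs_in consistent]].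
  have [xs xs_in gX] := sols_complete g_neq0 ((ric_nikP (Ric_opE g_neq0)).1 ric).
  by apply/hasP; exists xs => //; exact: signature_consistent.
have [g0 g0_neq0 g0X] := sols_realized xs_in.
have [g_neq0 sig_g gX] := root_weight_sign_flip g0_neq0 g0X consistent.
exists (fun i => (-1) ^+ (i \in S) * `|g0 i|); split=> //; split=> //.
apply/(ric_nikP (Ric_opE g_neq0)); apply: gram_system_eq_in (sols_gram xs_in).
by move=> t; rewrite Delta_T inE => /gX.
Qed.

End Classification.

Definition rat_realizes {n : nat} (T : seq ('I_n * 'I_n * 'I_n)) (xs gs : seq rat) : bool :=
  [&& size gs == n, all (fun q => q != 0) gs &
      all (fun t : 'I_n * 'I_n * 'I_n =>
        nth 0 gs t.2 / (nth 0 gs t.1.1 * nth 0 gs t.1.2) == nth 0 xs (index t T)) T].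

Lemma rat_realizesP (R : numFieldType) n (T : seq ('I_n * 'I_n * 'I_n)) xs gs :
  rat_realizes T xs gs ->
  exists2 g : 'I_n -> R, (forall i, g i != 0) & {in T, root_weight g =1 sol_of T xs}.
Proof.
case/and3P => /eqP size_gs /allP gs_neq0 /allP ratios.
exists (fun i => ratr (nth 0 gs i)) => [i | t t_in].
  by rewrite fmorph_eq0 gs_neq0 // mem_nth // size_gs.
by rewrite /root_weight /sol_of -(eqP (ratios t t_in)) fmorph_div rmorphM.
Qed.

Lemma Ric_op_sc_of (R : numFieldType) n (D : dform) (T : seq ('I_n * 'I_n * 'I_n)) :
  ricci_check n D (map untri T) -> delta_check n D (map untri T) -> uniq T ->
  forall g : 'I_n -> R, (forall i, g i != 0) -> forall b d : 'I_n,
  Ric_op (@sc_of R n D) g b d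
    = if b == d then 2^-1 * \sum_(t in Delta (@sc_of R n D)) rootrow R t b * root_weight g t
      else 0.
Proof.
move=> ricci delta T_uniq g g_neq0 b d.
by rewrite (big_Delta _ (Delta_sc_of R delta) T_uniq); exact: Ric_op_diag.
Qed.

Lemma finset_bits_ind n (P : {set 'I_n} -> Prop) :
  (forall bs, size bs == n -> P [set i : 'I_n | nth false bs i]) -> forall S, P S.
Proof.
move=> P_bits S.
suff -> : S = [set i : 'I_n | nth false [seq i \in S | i <- enum 'I_n] i].
  by apply: P_bits; rewrite size_map size_enum_ord.
by apply/setP => i; rewrite inE (nth_map i) ?size_enum_ord // nth_ord_enum.
Qed.

Lemma mem_sig_of_bits n bs (L : seq (seq nat)) :
  ([set i : 'I_n | nth false bs i] \in map (sig_of n) L)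
  = has (fun l => all (fun i => nth false bs i == (i.+1 \in l)) (iota 0 n)) L.
Proof.
apply/mapP/hasP => [[l l_in eqS] | [l l_in /allP eq_l]]; exists l => //.
  rewrite -(forall_ord_iota n (fun i => nth false bs i == (i.+1 \in l))).
  by apply/forallP => i; move/setP/(_ i): eqS; rewrite !inE => ->.
by apply/setP => i; rewrite !inE; apply/eqP/eq_l; rewrite mem_iota add0n ltn_ord.
Qed.

Lemma sign_consistent_bits n (T : seq ('I_n * 'I_n * 'I_n)) xs bs :
  sign_consistent T xs (fun i => i \in [set j : 'I_n | nth false bs j])
  = sign_consistent T xs (fun i : 'I_n => nth false bs i).
Proof. by apply: eq_all => t; rewrite !inE. Qed.

Fixpoint bitseqs (n : nat) : seq (seq bool) :=
  if n is n'.+1 then [seq b :: bs | b <- [:: true; false], bs <- bitseqs n'] else [:: [::]].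

Lemma mem_bitseqs bs : bs \in bitseqs (size bs).
Proof. by elim: bs => [|b bs IH] //; apply/allpairsP; exists (b, bs); case: b. Qed.

Definition sign_classes_check {n : nat} (T : seq ('I_n * 'I_n * 'I_n)) (sols : seq (seq rat))
    (L : seq (seq nat)) : bool :=
  all (fun bs => has (fun xs => sign_consistent T xs (fun i : 'I_n => nth false bs i)) sols
                 == has (fun l => all (fun i => nth false bs i == (i.+1 \in l)) (iota 0 n)) L)
      (bitseqs n).

Lemma sign_classes n (T : seq ('I_n * 'I_n * 'I_n)) sols L : sign_classes_check T sols L ->
  forall S : {set 'I_n},
  has (fun xs => sign_consistent T xs (fun i => i \in S)) sols = (S \in map (sig_of n) L).
Proof.
move=> /allP chk; apply: finset_bits_ind => bs /eqP size_bs.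
rewrite mem_sig_of_bits; under eq_has do rewrite sign_consistent_bits.
by apply/eqP/chk; rewrite -size_bs mem_bitseqs.
Qed.

Lemma all2_exists (S T : eqType) (r : S -> T -> bool) s t x :
  all2 r s t -> x \in s -> exists y, r x y.
Proof.
elim: s t => [|a s IH] [|b t] //= /andP[rab /IH rst].
by rewrite inE => /predU1P[-> | /rst]; [exists b |].
Qed.

Definition classification_check (n : nat) (D : dform) (T : seq ('I_n * 'I_n * 'I_n))
    (sols metrics : seq (seq rat)) (L : seq (seq nat)) : bool :=
  [&& ricci_check n D (map untri T), delta_check n D (map untri T), uniq T,
      all (rat_gram_check T) sols, all2 (rat_realizes T) sols metrics
    & sign_classes_check T sols L].

Theorem is_sig_classification (R : realFieldType) n (D : dform) (T : seq ('I_n * 'I_n * 'I_n))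
    sols metrics L :
  classification_check D T sols metrics L ->
  (forall g : 'I_n -> R, (forall i, g i != 0) -> gram_system (@sc_of R n D) (root_weight g) ->
     exists2 xs, xs \in sols & {in T, root_weight g =1 sol_of T xs}) ->
  forall S, is_sig (@sc_of R n D) S <-> S \in map (sig_of n) L.
Proof.
case/and5P=> ricci delta T_uniq /allP grams /andP[realized classes] complete S.
have Delta_T := Delta_sc_of R delta.
rewrite -(sign_classes classes); apply: (is_sig_consistent Delta_T _ _ _ complete).
- by move=> g g_neq0 b d; rewrite (Ric_op_sc_of ricci delta T_uniq g_neq0 b d).
- by move=> xs /grams; exact: rat_gram_checkP.
- by move=> xs /(all2_exists realized)[gs]; exact: rat_realizesP.
Qed.

(** * The three Lie algebras *)

Notation o_ k := (@Ordinal 7 k isT).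

(* Roots ((i,j),k) are numbered from 0, signatures from 1 (see [sig_of]). *)
Definition roots1 : seq ('I_7 * 'I_7 * 'I_7) :=
  [:: (o_ 0, o_ 1, o_ 2); (o_ 0, o_ 2, o_ 3); (o_ 0, o_ 4, o_ 5); (o_ 0, o_ 5, o_ 6);
      (o_ 1, o_ 2, o_ 4); (o_ 1, o_ 3, o_ 5); (o_ 2, o_ 3, o_ 6)].
Definition sols1 : seq (seq rat) :=
  [:: nseq 7 (1/5); [:: 6/5; -(4/5); 6/5; -(4/5); 6/5; -(9/5); 6/5]].
Definition metrics1 : seq (seq rat) :=
  [:: [:: 5; 1; 1; 1; 1/5; 1/5; 1/5]; [:: 5/4; 2/3; 1; -1; 4/5; 6/5; -(6/5)]].
Definition sigs1 : seq (seq nat) :=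
  [:: [::]; [:: 1; 2; 4; 5; 7]; [:: 1; 3; 5; 7]; [:: 2; 3; 4]; [:: 1; 2; 5];
      [:: 1; 3; 4; 5]; [:: 2; 3; 7]; [:: 4; 7]]%N.

Lemma gram_solutions1 (R : realFieldType) (g : 'I_7 -> R) : (forall i, g i != 0) ->
  gram_system (@sc_of R 7 D1) (root_weight g) ->
  exists2 xs, xs \in sols1 & {in roots1, root_weight g =1 sol_of roots1 xs}.
Proof.
move=> g_neq0; have Delta1 : Delta (@sc_of R 7 D1) = [set t in roots1].
  by apply: Delta_sc_of; vm_compute.
move/(gram_system_seqP Delta1 isT); rewrite /= !big_cons !big_nil /rootdot /=.
set x1 := root_weight g (o_ 0, o_ 1, o_ 2); set x2 := root_weight g (o_ 0, o_ 2, o_ 3).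
set x3 := root_weight g (o_ 0, o_ 4, o_ 5); set x4 := root_weight g (o_ 0, o_ 5, o_ 6).
set x5 := root_weight g (o_ 1, o_ 2, o_ 4); set x6 := root_weight g (o_ 1, o_ 3, o_ 5).
set x7 := root_weight g (o_ 2, o_ 3, o_ 6).
move=> [e1 [e2 [e3 [e4 [e5 [e6 [e7 _]]]]]]].
(* The Gram system has rank 5; the two multiplicative relations, reflecting
   linear dependencies among the rows of M_Delta, fix the remaining parameters. *)
have [x3E x4E x5E x6E x7E] : [/\ x3 = 2/5 - x2, x4 = 2/5 - x1, x5 = 2/5 - x2,
  x6 = 1/5 - x1 + x2 & x7 = x1] by split; lra.
have rel1 : x4 * x6 = x1 * x7 by rewrite /x1 /x4 /x6 /x7 /root_weight /=; field; rewrite !g_neq0.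
have rel2 : x3 * x5 = x2 * x6 by rewrite /x2 /x3 /x5 /x6 /root_weight /=; field; rewrite !g_neq0.
clear e1 e2 e3 e4 e5 e6 e7; rewrite ?x3E ?x4E ?x5E ?x6E ?x7E in rel1 rel2.
have x2E : x2 = 2/5 - x1 by nra.
have /eqP : (x1 - 1/5) * (x1 - 6/5) = 0 by rewrite x2E in rel1; nra.
rewrite mulf_eq0 !subr_eq0 => /orP[] /eqP x1E; clear rel1 rel2.
  exists (nseq 7 (1/5)); first by rewrite inE eqxx.
  apply/foldr_andP; rewrite /sol_of /= -/x1 -/x2 -/x3 -/x4 -/x5 -/x6 -/x7.
  by rewrite x3E x4E x5E x6E x7E x2E x1E; do !split; lra.
exists [:: 6/5; -(4/5); 6/5; -(4/5); 6/5; -(9/5); 6/5]; first by rewrite !inE eqxx orbT.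
apply/foldr_andP; rewrite /sol_of /= -/x1 -/x2 -/x3 -/x4 -/x5 -/x6 -/x7.
by rewrite x3E x4E x5E x6E x7E x2E x1E; do !split; lra.
Qed.

Lemma is_sig1 (R : realFieldType) (S : {set 'I_7}) :
  is_sig (@sc_of R 7 D1) S <-> S \in map (sig_of 7) sigs1.
Proof.
by apply: (is_sig_classification (metrics := metrics1) _ (@gram_solutions1 R)); vm_compute.
Qed.

Definition roots2 : seq ('I_7 * 'I_7 * 'I_7) :=
  [:: (o_ 0, o_ 1, o_ 3); (o_ 0, o_ 3, o_ 4); (o_ 0, o_ 4, o_ 5); (o_ 0, o_ 5, o_ 6);
      (o_ 1, o_ 2, o_ 4); (o_ 2, o_ 3, o_ 5); (o_ 2, o_ 4, o_ 6)].
Definition sols2 : seq (seq rat) :=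
  [:: nseq 7 (1/5); [:: -(4/5); 6/5; 6/5; -(4/5); 6/5; -(9/5); 6/5]].
Definition metrics2 : seq (seq rat) :=
  [:: [:: 5; 1/5; 5; 1/5; 1/5; 1/5; 1/5]; [:: 5/4; -(1/3); -(5/4); 1/3; 1/2; 3/4; -(3/4)]].
Definition sigs2 : seq (seq nat) :=
  [:: [::]; [:: 1; 2; 5; 7]; [:: 1; 4; 6]; [:: 2; 4; 5; 6; 7]; [:: 1; 2; 3; 4; 6; 7];
      [:: 1; 3; 5]; [:: 2; 3; 7]; [:: 3; 4; 5; 6]]%N.

Lemma gram_solutions2 (R : realFieldType) (g : 'I_7 -> R) : (forall i, g i != 0) ->
  gram_system (@sc_of R 7 D2) (root_weight g) ->
  exists2 xs, xs \in sols2 & {in roots2, root_weight g =1 sol_of roots2 xs}.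
Proof.
move=> g_neq0; have Delta2 : Delta (@sc_of R 7 D2) = [set t in roots2].
  by apply: Delta_sc_of; vm_compute.
move/(gram_system_seqP Delta2 isT); rewrite /= !big_cons !big_nil /rootdot /=.
set x1 := root_weight g (o_ 0, o_ 1, o_ 3); set x2 := root_weight g (o_ 0, o_ 3, o_ 4).
set x3 := root_weight g (o_ 0, o_ 4, o_ 5); set x4 := root_weight g (o_ 0, o_ 5, o_ 6).
set x5 := root_weight g (o_ 1, o_ 2, o_ 4); set x6 := root_weight g (o_ 2, o_ 3, o_ 5).
set x7 := root_weight g (o_ 2, o_ 4, o_ 6).
move=> [e1 [e2 [e3 [e4 [e5 [e6 [e7 _]]]]]]].
have [x3E x4E x5E x6E x7E] : [/\ x3 = 2/5 - x1, x4 = 2/5 - x2, x5 = 2/5 - x1,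
  x6 = 1/5 + x1 - x2 & x7 = x2] by split; lra.
have rel1 : x4 * x6 = x2 * x7 by rewrite /x2 /x4 /x6 /x7 /root_weight /=; field; rewrite !g_neq0.
have rel2 : x3 * x5 = x1 * x6 by rewrite /x1 /x3 /x5 /x6 /root_weight /=; field; rewrite !g_neq0.
clear e1 e2 e3 e4 e5 e6 e7; rewrite ?x3E ?x4E ?x5E ?x6E ?x7E in rel1 rel2.
have x1E : x1 = 2/5 - x2 by nra.
have /eqP : (x2 - 1/5) * (x2 - 6/5) = 0 by rewrite x1E in rel1; nra.
rewrite mulf_eq0 !subr_eq0 => /orP[] /eqP x2E; clear rel1 rel2.
  exists (nseq 7 (1/5)); first by rewrite inE eqxx.
  apply/foldr_andP; rewrite /sol_of /= -/x1 -/x2 -/x3 -/x4 -/x5 -/x6 -/x7.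
  by rewrite x3E x4E x5E x6E x7E x1E x2E; do !split; lra.
exists [:: -(4/5); 6/5; 6/5; -(4/5); 6/5; -(9/5); 6/5]; first by rewrite !inE eqxx orbT.
apply/foldr_andP; rewrite /sol_of /= -/x1 -/x2 -/x3 -/x4 -/x5 -/x6 -/x7.
by rewrite x3E x4E x5E x6E x7E x1E x2E; do !split; lra.
Qed.

Lemma is_sig2 (R : realFieldType) (S : {set 'I_7}) :
  is_sig (@sc_of R 7 D2) S <-> S \in map (sig_of 7) sigs2.
Proof.
by apply: (is_sig_classification (metrics := metrics2) _ (@gram_solutions2 R)); vm_compute.
Qed.

Definition roots3 : seq ('I_7 * 'I_7 * 'I_7) :=
  [:: (o_ 0, o_ 1, o_ 2); (o_ 0, o_ 2, o_ 3); (o_ 0, o_ 3, o_ 4); (o_ 0, o_ 4, o_ 5);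
      (o_ 1, o_ 2, o_ 4); (o_ 1, o_ 3, o_ 5); (o_ 1, o_ 4, o_ 6); (o_ 2, o_ 3, o_ 6)].
Definition sols3 : seq (seq rat) := [:: [:: 1/5; 4/15; 1/5; 2/15; 2/15; 1/15; 1/5; 1/5]].
Definition metrics3 : seq (seq rat) := [:: [:: 5/2; 5/2; 5/4; 5/6; 5/12; 5/36; 5/24]].
Definition sigs3 : seq (seq nat) := [:: [::]; [:: 1; 3; 5; 7]]%N.

Lemma gram_solutions3 (R : realFieldType) (g : 'I_7 -> R) : (forall i, g i != 0) ->
  gram_system (@sc_of R 7 D3) (root_weight g) ->
  exists2 xs, xs \in sols3 & {in roots3, root_weight g =1 sol_of roots3 xs}.
Proof.
move=> g_neq0; have Delta3 : Delta (@sc_of R 7 D3) = [set t in roots3].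
  by apply: Delta_sc_of; vm_compute.
move/(gram_system_seqP Delta3 isT); rewrite /= !big_cons !big_nil /rootdot /=.
set x1 := root_weight g (o_ 0, o_ 1, o_ 2); set x2 := root_weight g (o_ 0, o_ 2, o_ 3).
set x3 := root_weight g (o_ 0, o_ 3, o_ 4); set x4 := root_weight g (o_ 0, o_ 4, o_ 5).
set x5 := root_weight g (o_ 1, o_ 2, o_ 4); set x6 := root_weight g (o_ 1, o_ 3, o_ 5).
set x7 := root_weight g (o_ 1, o_ 4, o_ 6); set x8 := root_weight g (o_ 2, o_ 3, o_ 6).
move=> [e1 [e2 [e3 [e4 [e5 [e6 [e7 [e8 _]]]]]]]].
have [x3E x4E x5E x6E] : [/\ x3 = 2/5 - x1, x4 = 2/5 - x2, x5 = 2/5 - x2 & x6 = x2 - 1/5].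
  by split; lra.
have [x7E x8E] : x7 = 2/5 - x1 /\ x8 = x1 by split; lra.
have rel1 : x3 * x7 = x1 * x8 by rewrite /x1 /x3 /x7 /x8 /root_weight /=; field; rewrite !g_neq0.
have rel2 : x4 * x5 = x2 * x6 by rewrite /x2 /x4 /x5 /x6 /root_weight /=; field; rewrite !g_neq0.
clear e1 e2 e3 e4 e5 e6 e7 e8; rewrite ?x3E ?x4E ?x5E ?x6E ?x7E ?x8E in rel1 rel2.
have x1E : x1 = 1/5 by nra.
have x2E : x2 = 4/15 by nra.
clear rel1 rel2; exists [:: 1/5; 4/15; 1/5; 2/15; 2/15; 1/15; 1/5; 1/5].
  by rewrite inE eqxx.
apply/foldr_andP; rewrite /sol_of /= -/x1 -/x2 -/x3 -/x4 -/x5 -/x6 -/x7 -/x8.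
by rewrite x3E x4E x5E x6E x7E x8E x1E x2E; do !split; lra.
Qed.

Lemma is_sig3 (R : realFieldType) (S : {set 'I_7}) :
  is_sig (@sc_of R 7 D3) S <-> S \in map (sig_of 7) sigs3.
Proof.
by apply: (is_sig_classification (metrics := metrics3) _ (@gram_solutions3 R)); vm_compute.
Qed.

Theorem lemma2p7 (R : realType) :
  (forall S : {set 'I_7},
     is_sig (@sc_of R 7 D1) S <->
     S \in [:: sig_of 7 [::]%N; sig_of 7 [:: 1; 2; 4; 5; 7]%N; sig_of 7 [:: 1; 3; 5; 7]%N;
               sig_of 7 [:: 2; 3; 4]%N; sig_of 7 [:: 1; 2; 5]%N; sig_of 7 [:: 1; 3; 4; 5]%N;
               sig_of 7 [:: 2; 3; 7]%N; sig_of 7 [:: 4; 7]%N]%N)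
  /\
  (forall S : {set 'I_7},
     is_sig (@sc_of R 7 D2) S <->
     S \in [:: sig_of 7 [::]%N; sig_of 7 [:: 1; 2; 5; 7]%N; sig_of 7 [:: 1; 4; 6]%N;
               sig_of 7 [:: 2; 4; 5; 6; 7]%N; sig_of 7 [:: 1; 2; 3; 4; 6; 7]%N;
               sig_of 7 [:: 1; 3; 5]%N; sig_of 7 [:: 2; 3; 7]%N; sig_of 7 [:: 3; 4; 5; 6]%N]%N)
  /\
  (forall S : {set 'I_7},
     is_sig (@sc_of R 7 D3) S <->
     S \in [:: sig_of 7 [::]%N; sig_of 7 [:: 1; 3; 5; 7]%N]%N).
Proof. by split; [exact: is_sig1 | split; [exact: is_sig2 | exact: is_sig3]]. Qed.
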